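(* For every integer $n\ge2$, the Mobius ladder $M_{2n}$ admits no extended irregular dominating set.
   Context: For $n\ge2$, the Mobius ladder $M_{2n}$ has vertex set $\{x_1,\dots,x_{2n}\}$ and edge set $\{\{x_i,x_{i+1}\}:1\le i\le 2n\}\cup\{\{x_i,x_{i+n}\}:1\le i\le n\}$, subscripts modulo $2n$. In a finite simple graph $\Gamma=(V,E)$ with distance $d$, a vertex $v$ carrying a non-negative integer label $\ell$ dominates (covers) exactly the vertices $u$ with $d(u,v)=\ell$; a vertex labeled $0$ dominates only itself. An extended irregular dominating set is a set $S\subseteq V$ with a labeling $\lambda:S\to\mathbb{Z}_{\ge0}$ with distinct labels on distinct vertices, such that every vertex of $V$ is dominated by some vertex of $S$; it is assumed that some vertex of $S$ has label $0$. *)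

From mathcomp Require Import all_boot.
Set Implicit Arguments. Unset Strict Implicit. Unset Printing Implicit Defensive.

(* Mobius ladder M_{2n}: vertex x_{i+1} is represented by i : 'I_(2n)
   (indices 0..2n-1, arithmetic modulo 2n).  Edges: {x_i, x_{i+1}} and
   {x_i, x_{i+n}} (subscripts mod 2n). *)
Definition mobius_adj (n : nat) : rel 'I_(2 * n) :=
  fun i j =>
    [|| (j : nat) == (i + 1) %% (2 * n),
        (i : nat) == (j + 1) %% (2 * n)
      | (j : nat) == (i + n) %% (2 * n)].

Definition walk_len (T : finType) (adj : rel T) (u v : T) (k : nat) : bool :=
  [exists s : k.-tuple T, path adj u s && (last u s == v)].

Definition dist_is (T : finType) (adj : rel T) (u v : T) (k : nat) : Prop :=
  walk_len adj u v k /\ forall m, m < k -> ~~ walk_len adj u v m.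

(* Extended irregular dominating set: S with labeling lam (only its values on
   S matter), distinct labels on distinct vertices of S, some label 0, and
   every vertex u is dominated: d(u,v) = lam v for some v in S. *)
Definition ext_irr_dom (T : finType) (adj : rel T) (S : {set T}) (lam : T -> nat)
  : Prop :=
  {in S &, injective lam} /\
  (exists2 v, v \in S & lam v = 0) /\
  (forall u : T, exists2 v, v \in S & dist_is adj u v (lam v)).

From mathcomp Require Import all_boot zify.
Set Implicit Arguments. Unset Strict Implicit. Unset Printing Implicit Defensive.

(* In M_2n, d(u, v) = N(v - u) for the word norm N of Z/2n with respect to the
   steps +-1 and n, so all spheres of a given radius have the same size. Assign
   to every vertex one of its dominators. The vertices assigned to the dominator
   labelled l lie on its sphere of radius l; these classes and the spheres about
   any fixed centre both partition the vertex set, so every class is a whole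
   sphere. Hence each vertex has exactly one dominator, and every distance occurs
   as a label. Let x carry the label N(n - 1) = d(x, x + n +- 1) > 0 and let
   v <> x dominate x. One of x + n +- 1 is as far from v as x is, so it is
   dominated both by v and by x. *)

Lemma sum_card_fibers (T : finType) (f : T -> nat) K : (forall x, f x < K) ->
  \sum_(l < K) #|[set x | f x == l]| = #|T|.
Proof.
move=> f_lt; rewrite -sum1_card (partition_big (fun x => Ordinal (f_lt x)) xpredT) //=.
apply: eq_bigr => l _; rewrite -sum1_card; apply: eq_bigl => x.
by rewrite inE -val_eqE.
Qed.

Section GraphDistance.

Variables (T : finType) (adj : rel T) (dst : T -> T -> nat).
Hypotheses (dst_refl : forall u, dst u u = 0) (dst_eq0 : forall u v, dst u v = 0 -> u = v).
Hypothesis dst_adj : forall u x y, adj x y -> dst u y <= (dst u x).+1.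
Hypothesis dst_descent : forall u v k, dst u v = k.+1 -> exists2 x, adj u x & dst x v = k.

Lemma dst_path u x s : path adj x s -> dst u (last x s) <= dst u x + size s.
Proof.
elim: s x => [|y s IHs] x /=; first by rewrite addn0.
case/andP=> xy /IHs ys; rewrite addnS -addSn (leq_trans ys) // leq_add2r.
exact: dst_adj.
Qed.

Lemma walk_len_dst u v k : walk_len adj u v k -> dst u v <= k.
Proof.
case/existsP=> s /andP[/(dst_path u) + /eqP <-].
by rewrite dst_refl size_tuple.
Qed.

Lemma walk_len_dst_self u v : walk_len adj u v (dst u v).
Proof.
suff walk_k k : forall x, dst x v = k -> walk_len adj x v k by exact: walk_k.
elim: k => [|k IHk] x.
  by move/dst_eq0->; apply/existsP; exists [tuple]; rewrite /= eqxx.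
case/dst_descent=> y xy /IHk /existsP[s /andP[ys sv]].
by apply/existsP; exists [tuple of y :: s]; rewrite /= xy ys.
Qed.

Lemma dist_isE u v k : dist_is adj u v k -> k = dst u v.
Proof.
case=> walk_k shorter; apply/eqP; rewrite eqn_leq (walk_len_dst walk_k) andbT.
by rewrite leqNgt; apply/negP => /shorter; rewrite walk_len_dst_self.
Qed.

End GraphDistance.

Section UniqueDomination.

Variables (T : finType) (d : T -> T -> nat).
Hypothesis card_sphere_const :
  forall v w l, #|[set u | d u v == l]| = #|[set u | d u w == l]|.
Variables (S : {set T}) (lam : T -> nat).
Hypothesis lam_inj : {in S &, injective lam}.

Section DominatorChoice.

Variable dom : T -> T.
Hypothesis domP : forall u, dom u \in S /\ d u (dom u) = lam (dom u).

Lemma label_class_sub_sphere v : v \in S ->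
  [set u | lam (dom u) == lam v] \subset [set u | d u v == lam v].
Proof.
move=> vS; apply/subsetP=> u; rewrite !inE => /eqP same.
have [uS du] := domP u.
by rewrite -(lam_inj uS vS same) du.
Qed.

(* Each class lies in a sphere of radius [l]; the classes, like the spheres
   about [v], partition [T], so no inclusion can be strict. *)
Lemma card_label_class v l :
  #|[set u | lam (dom u) == l]| = #|[set u | d u v == l]|.
Proof.
pose K := (maxn l (\max_(p : T * T) d p.1 p.2)).+1.
have d_lt u w : d u w < K by rewrite ltnS leq_max (leq_bigmax (u, w)) orbT.
have le_class l' : #|[set u | lam (dom u) == l']| <= #|[set u | d u v == l']|.
  case: (posnP #|[set u | lam (dom u) == l']|) => [-> // | /card_gt0P[u0]].
  rewrite inE => /eqP <-; rewrite (card_sphere_const v (dom u0)).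
  exact/subset_leq_card/label_class_sub_sphere/(domP u0).1.
have label_lt u : lam (dom u) < K by rewrite -(domP u).2.
have := @leqif_sum 'I_K xpredT _ _ _ (fun l' _ => leqif_eq (le_class l')).
case=> _; rewrite (sum_card_fibers label_lt) (sum_card_fibers (d_lt^~ v)) eqxx.
move=> /esym/forallP all_eq.
have l_lt : l < K by rewrite ltnS leq_maxl.
by have /eqP := all_eq (Ordinal l_lt).
Qed.

Lemma label_class_sphere v : v \in S ->
  [set u | lam (dom u) == lam v] = [set u | d u v == lam v].
Proof.
move=> vS; apply/eqP; rewrite eqEcard label_class_sub_sphere //=.
by rewrite (card_label_class v).
Qed.

End DominatorChoice.

Hypothesis dominating : forall u, exists2 v, v \in S & d u v = lam v.

Lemma dominator_choice : exists dom : T -> T, forall u, dom u \in S /\ d u (dom u) = lam (dom u).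
Proof.
apply: (@fin_all_exists _ (fun=> T) (fun u v => v \in S /\ d u v = lam v)) => u.
by have [v vS dv] := dominating u; exists v.
Qed.

Lemma dominator_unique u v w :
  v \in S -> w \in S -> d u v = lam v -> d u w = lam w -> v = w.
Proof.
(* The counting applies to any choice of dominators, e.g. one sending [u] to [v]. *)
move=> vS wS dv dw; have [dom domP] := dominator_choice.
pose dom' x := if x == u then v else dom x.
have dom'P x : dom' x \in S /\ d x (dom' x) = lam (dom' x).
  by rewrite /dom'; case: eqP => [->|_]; [split | exact: domP].
have : u \in [set x | d x w == lam w] by rewrite inE dw.
by rewrite -(label_class_sphere dom'P wS) inE /dom' eqxx => /eqP/lam_inj->.
Qed.

Lemma label_realized u v : exists2 w, w \in S & lam w = d u v.
Proof.
have [dom domP] := dominator_choice.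
have : 0 < #|[set x | d x v == d u v]| by apply/card_gt0P; exists u; rewrite inE.
rewrite -(card_label_class domP) => /card_gt0P[x]; rewrite inE => /eqP <-.
by exists (dom x); [exact: (domP x).1 | ].
Qed.

End UniqueDomination.

Lemma modn_lt2 m a : a < 2 * m -> a %% m = if a < m then a else a - m.
Proof.
move=> a_lt; case: ifP => [|/negbT]; first exact: modn_small.
by rewrite -leqNgt => /subnK {1}<-; rewrite modnDr modn_small //; lia.
Qed.

(* Case-splits every [a %% m] (innermost first, each with [a < 2 * m]) and calls lia. *)
Ltac mod_lia :=
  intros; repeat match goal with H : context [_ %% _] |- _ => revert H end;
  repeat match goal with
  | |- context [?a %% ?m] =>
      lazymatch a with
      | context [_ %% _] => fail
      | _ => rewrite (@modn_lt2 m a); [case: ifP => ? | lia]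
      end
  end; lia.

Section MobiusLadder.

Variable n : nat.

(* [c] is the distance along the rim; a path using one rung has length [n + 1 - c]. *)
Definition ladder_norm (t : nat) :=
  let c := minn t (2 * n - t) in minn c (n.+1 - c).

Definition ladder_steps := [:: 1; (2 * n).-1; n].

(* [v - u] modulo [2 * n], without truncated subtraction. *)
Definition offset (u v : 'I_(2 * n)) := (v + (2 * n - u)) %% (2 * n).

Definition mdist (u v : 'I_(2 * n)) := ladder_norm (offset u v).

Definition rot (k : nat) (x : 'I_(2 * n)) : 'I_(2 * n) :=
  Ordinal (ltn_pmod (x + k) (leq_ltn_trans (leq0n x) (ltn_ord x))).

Lemma offset_lt u v : offset u v < 2 * n.
Proof. by apply: ltn_pmod; have := ltn_ord u; lia. Qed.

Lemma offset_trans u x y : offset u y = (offset u x + offset x y) %% (2 * n).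
Proof.
have := ltn_ord u; have := ltn_ord x.
by rewrite /offset modnDm -[LHS](modnDr _ (2 * n)) => ? ?; congr (_ %% _); lia.
Qed.

Lemma offset_rotl k x v : k <= 2 * n ->
  offset (rot k x) v = (offset x v + (2 * n - k)) %% (2 * n).
Proof. by rewrite /offset /=; have := ltn_ord x; have := ltn_ord v; mod_lia. Qed.

Lemma mobius_adjE x y : mobius_adj x y = (offset x y \in ladder_steps).
Proof. by rewrite /mobius_adj /offset !inE; have := ltn_ord x; have := ltn_ord y; mod_lia. Qed.

Lemma ladder_norm_step t s : t < 2 * n -> s \in ladder_steps ->
  ladder_norm ((t + s) %% (2 * n)) <= (ladder_norm t).+1.
Proof. by rewrite /ladder_norm !inE; mod_lia. Qed.

Lemma ladder_norm_descent t k : t < 2 * n -> ladder_norm t = k.+1 ->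
  exists2 s, s \in ladder_steps & ladder_norm ((t + (2 * n - s)) %% (2 * n)) = k.
Proof.
rewrite /ladder_norm => t_lt tk.
have [back|not_back] := boolP ((0 < t <= n) && (2 * t <= n.+1)).
  by exists 1; rewrite ?inE ?eqxx //; move: tk back; mod_lia.
have [fwd|not_fwd] := boolP ((n < t) && (2 * (2 * n - t) <= n.+1)).
  by exists (2 * n).-1; rewrite ?inE ?eqxx ?orbT //; move: tk fwd; mod_lia.
by exists n; rewrite ?inE ?eqxx ?orbT //; move: tk not_back not_fwd; mod_lia.
Qed.

Lemma ladder_norm_partner t : t < 2 * n -> 0 < ladder_norm t ->
  ladder_norm ((t + (2 * n - n.+1)) %% (2 * n)) = ladder_norm t \/
  ladder_norm ((t + (2 * n - n.-1)) %% (2 * n)) = ladder_norm t.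
Proof.
rewrite /ladder_norm => t_lt t_pos.
have [t_le|n_lt] := leqP t n; [left | right]; move: t_pos; mod_lia.
Qed.

Lemma ladder_norm_pred_gt0 : 1 < n -> 0 < ladder_norm n.-1.
Proof. rewrite /ladder_norm; lia. Qed.

Lemma mobius_adj_rot x s : s \in ladder_steps -> mobius_adj x (rot s x).
Proof. by rewrite /mobius_adj /= !inE; have := ltn_ord x; mod_lia. Qed.

Lemma mdist_refl u : mdist u u = 0.
Proof. by rewrite /mdist /offset /ladder_norm; have := ltn_ord u; mod_lia. Qed.

Lemma mdist_eq0 u v : mdist u v = 0 -> u = v.
Proof.
move=> uv; apply: val_inj => /=; move: uv.
by rewrite /mdist /offset /ladder_norm; have := ltn_ord u; have := ltn_ord v; mod_lia.
Qed.

Lemma mdist_adj u x y : mobius_adj x y -> mdist u y <= (mdist u x).+1.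
Proof.
rewrite mobius_adjE /mdist (offset_trans u x y).
exact: ladder_norm_step (offset_lt u x).
Qed.

Lemma mdist_descent u v k : mdist u v = k.+1 ->
  exists2 x, mobius_adj u x & mdist x v = k.
Proof.
case/(ladder_norm_descent (offset_lt u v)) => s s_step norm_k.
exists (rot s u); first exact: mobius_adj_rot.
by rewrite /mdist offset_rotl //; move: s_step (ltn_ord u); rewrite !inE; lia.
Qed.

Definition mirror (v u : 'I_(2 * n)) : 'I_(2 * n) := Ordinal (offset_lt u v).

Lemma mirror_involutive v : involutive (mirror v).
Proof.
move=> u; apply: val_inj; rewrite /mirror /offset /=.
by have := ltn_ord u; have := ltn_ord v; mod_lia.
Qed.

Lemma card_mdist_sphere v l :
  #|[set u | mdist u v == l]| = #|[set t : 'I_(2 * n) | ladder_norm t == l]|.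
Proof.
have -> : [set u | mdist u v == l] = mirror v @^-1: [set t : 'I_(2 * n) | ladder_norm t == l].
  by apply/setP => u; rewrite !inE.
by rewrite card_preimset //; exact/inv_inj/mirror_involutive.
Qed.

Lemma card_mdist_sphere_const v w l :
  #|[set u | mdist u v == l]| = #|[set u | mdist u w == l]|.
Proof. by rewrite !card_mdist_sphere. Qed.

Lemma mobius_dist_isE u v k : dist_is (@mobius_adj n) u v k -> k = mdist u v.
Proof. exact: (@dist_isE _ (@mobius_adj n) _ mdist_refl (@mdist_eq0) (@mdist_adj) (@mdist_descent)). Qed.

Lemma mdist_partner_self x :
  mdist (rot n.+1 x) x = ladder_norm n.-1 /\ mdist (rot n.-1 x) x = ladder_norm n.-1.
Proof. by rewrite /mdist /offset /ladder_norm /=; have := ltn_ord x; split; mod_lia. Qed.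

Lemma mdist_partner x v : x != v ->
  exists2 p, mdist p v = mdist x v & mdist p x = ladder_norm n.-1.
Proof.
move=> xv; have [far_succ far_pred] := mdist_partner_self x.
have x_lt := ltn_ord x.
have : 0 < ladder_norm (offset x v).
  by rewrite lt0n; apply: contra xv => /eqP/mdist_eq0->.
case/(ladder_norm_partner (offset_lt x v)) => same;
  [exists (rot n.+1 x) | exists (rot n.-1 x)] => //;
  by rewrite /mdist offset_rotl; [exact: same | lia].
Qed.

End MobiusLadder.

Theorem theorem3p6 (n : nat) (hn : 2 <= n) :
  ~ exists (S : {set 'I_(2 * n)}) (lam : 'I_(2 * n) -> nat),
      ext_irr_dom (@mobius_adj n) S lam.
Proof.
case=> S [lam [lam_inj [_ dominated]]].
have dominating u : exists2 v, v \in S & mdist u v = lam v.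
  by have [v vS /mobius_dist_isE] := dominated u; exists v.
have unique := dominator_unique (@card_mdist_sphere_const n) lam_inj dominating.
have n2_gt0 : 0 < 2 * n by lia.
pose x0 := Ordinal n2_gt0.
have [x xS lam_x] :=
  label_realized (@card_mdist_sphere_const n) lam_inj dominating (rot n.+1 x0) x0.
rewrite (mdist_partner_self x0).1 in lam_x.
have [v vS dv] := dominating x.
have [xv|xv] := eqVneq x v.
  by move: dv (ladder_norm_pred_gt0 hn); rewrite -xv mdist_refl lam_x => <-.
have [p pv px] := mdist_partner xv.
have vx : v = x by apply: (unique p) => //; [rewrite pv | rewrite px lam_x].
by rewrite vx eqxx in xv.
Qed.
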